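(* Let $\sigma$ be a signature including $\{\triangleright, \wedge\}$, let $\mathcal{A}$ be a $\sigma$-algebra and let $\theta$ be a representation of $\mathcal{A}$ by partial functions. If $\theta$ is join complete, then $\theta$ is meet complete.
   Context: Signatures $\sigma$ are sets of operation symbols drawn from: $\triangleright$ (antidomain restriction), $;$ (composition), $\wedge$ (intersection), $\mathrm{upd}$ (update), $\sqcup$ (preferential union), $\mathsf{D}$ (domain), $\mathsf{A}$ (antidomain), interpreted on partial functions as: $f \triangleright g = \{(x,y) \in g : x \notin \mathrm{dom}(f)\}$; $f;g$ = relational composition ($f$ first); $f\wedge g = f\cap g$; $\mathrm{upd}(f,g)(x)$ is $f(x)$ if $f(x)$ defined and $g(x)$ undefined, $g(x)$ if both defined, undefined otherwise; $(f\sqcup g)(x)$ is $f(x)$ if defined, else $g(x)$; $\mathsf{D}(f)$ = identity on $\mathrm{dom}(f)$; $\mathsf{A}(f)$ = identity on the complement of $\mathrm{dom}(f)$ in the base. A representation by partial functions is an isomorphism onto a $\sigma$-algebra of partial functions with these operations. Define $0 := a\triangleright a$, $a\lhd b := (a\triangleright b)\triangleright b$, $a \le b :\iff a\lhd b = a$; for representable algebras this is a partial order and $a\le b \iff \theta(a)\subseteq\theta(b)$ for any representation $\theta$. $\theta$ is join complete if for every $S\subseteq\mathcal{A}$ with $\bigvee S$ existing, $\theta(\bigvee S)=\bigcup\theta[S]$; meet complete if for every nonempty $S$ with $\bigwedge S$ existing (in the poset $(\mathcal{A},\le)$), $\theta(\bigwedge S)=\bigcap\theta[S]$. *)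

(* Partial functions on a base set X are represented by their
   graphs: relations X -> X -> Prop that are functional. *)

Inductive op : Type :=
| OpRestr  (* antidomain restriction  |> *)
| OpComp
| OpMeet
| OpUpd
| OpPref
| OpDom
| OpAdom.

Definition signature := op -> Prop.

(* An algebra carrying an interpretation of every symbol; only the symbols in
   the signature sigma are constrained (by the representation), so this is a
   sigma-algebra (the other fields are irrelevant). *)
Record alg : Type := Alg {
  carrier :> Type;
  a_restr : carrier -> carrier -> carrier;
  a_comp  : carrier -> carrier -> carrier;
  a_meet  : carrier -> carrier -> carrier;
  a_upd   : carrier -> carrier -> carrier;
  a_pref  : carrier -> carrier -> carrier;
  a_dom   : carrier -> carrier;
  a_adom  : carrier -> carrier
}.

Definition prel (X : Type) := X -> X -> Prop.

Definition functional {X : Type} (f : prel X) : Prop :=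
  forall x y z, f x y -> f x z -> y = z.

Definition defined {X : Type} (f : prel X) (x : X) : Prop := exists z, f x z.

Definition releq {X : Type} (f g : prel X) : Prop := forall x y, f x y <-> g x y.

Definition r_restr {X} (f g : prel X) : prel X :=
  fun x y => g x y /\ ~ defined f x.
Definition r_comp {X} (f g : prel X) : prel X :=
  fun x y => exists z, f x z /\ g z y.
Definition r_meet {X} (f g : prel X) : prel X :=
  fun x y => f x y /\ g x y.
Definition r_upd {X} (f g : prel X) : prel X :=
  fun x y => (f x y /\ ~ defined g x) \/ (defined f x /\ g x y).
Definition r_pref {X} (f g : prel X) : prel X :=
  fun x y => f x y \/ (~ defined f x /\ g x y).
Definition r_dom {X} (f : prel X) : prel X :=
  fun x y => x = y /\ defined f x.
Definition r_adom {X} (f : prel X) : prel X :=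
  fun x y => x = y /\ ~ defined f x.

Definition is_rep (sig : signature) (A : alg) (X : Type) (theta : A -> prel X) : Prop :=
  (forall a, functional (theta a)) /\
  (forall a b, releq (theta a) (theta b) -> a = b) /\
  (sig OpRestr -> forall a b, releq (theta (a_restr A a b)) (r_restr (theta a) (theta b))) /\
  (sig OpComp  -> forall a b, releq (theta (a_comp A a b))  (r_comp (theta a) (theta b))) /\
  (sig OpMeet  -> forall a b, releq (theta (a_meet A a b))  (r_meet (theta a) (theta b))) /\
  (sig OpUpd   -> forall a b, releq (theta (a_upd A a b))   (r_upd (theta a) (theta b))) /\
  (sig OpPref  -> forall a b, releq (theta (a_pref A a b))  (r_pref (theta a) (theta b))) /\
  (sig OpDom   -> forall a, releq (theta (a_dom A a)) (r_dom (theta a))) /\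
  (sig OpAdom  -> forall a, releq (theta (a_adom A a)) (r_adom (theta a))).

Definition a_lhd (A : alg) (a b : A) : A := a_restr A (a_restr A a b) b.
Definition leA (A : alg) (a b : A) : Prop := a_lhd A a b = a.

Definition is_join (A : alg) (S : A -> Prop) (j : A) : Prop :=
  (forall s, S s -> leA A s j) /\
  (forall u, (forall s, S s -> leA A s u) -> leA A j u).

Definition is_meet (A : alg) (S : A -> Prop) (m : A) : Prop :=
  (forall s, S s -> leA A m s) /\
  (forall l, (forall s, S s -> leA A l s) -> leA A l m).

Definition join_complete (A : alg) (X : Type) (theta : A -> prel X) : Prop :=
  forall (S : A -> Prop) (j : A), is_join A S j ->
    releq (theta j) (fun x y => exists s, S s /\ theta s x y).

Definition meet_complete (A : alg) (X : Type) (theta : A -> prel X) : Prop :=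
  forall (S : A -> Prop) (m : A), (exists s, S s) -> is_meet A S m ->
    releq (theta m) (fun x y => forall s, S s -> theta s x y).

(* Let m be the meet of a nonempty S.  Trivially theta(m) is contained in the
   intersection of theta[S]; the converse inclusion is the content.  Take
   (x,y) in every theta(s).  If x lies in the domain of theta(m), functionality
   forces theta(m)(x) = y.  Otherwise let c := m |> s0 for some s0 in S; then
   (x,y) is in theta(c).  For each s write d(s) := (s /\ c) |> c, whose image is
   "c where s disagrees with c".  Because c lives off the domain of every lower
   bound of S, c is the join of { d(s) : s in S }; join completeness then puts
   (x,y) in some theta(d(s)), i.e. theta(s) x y fails -- a contradiction. *)

From Stdlib Require Import Classical Setoid.

Section RepresentationByPartialFunctions.

Variables (A : alg) (X : Type) (theta : A -> prel X).

Hypothesis theta_functional : forall a, functional (theta a).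
Hypothesis theta_injective : forall a b, releq (theta a) (theta b) -> a = b.
Hypothesis theta_restr : forall a b x y,
  theta (a_restr A a b) x y <-> theta b x y /\ ~ defined (theta a) x.

Lemma leA_iff_incl (a b : A) :
  leA A a b <-> (forall x y, theta a x y -> theta b x y).
Proof.
  unfold leA, a_lhd. split.
  - intros Hle x y Ha. rewrite <- Hle, theta_restr in Ha. tauto.
  - intros Hincl. apply theta_injective. intros x y.
    rewrite theta_restr. split.
    + intros [Hb Hnot]. apply NNPP. intros Hna. apply Hnot.
      exists y. rewrite theta_restr. split; [exact Hb |].
      intros [w Hw]. apply Hna.
      rewrite (theta_functional b x y w Hb (Hincl x w Hw)). exact Hw.
    + intros Ha. split; [exact (Hincl x y Ha) |].
      intros [z Hz]. rewrite theta_restr in Hz. apply (proj2 Hz). exists y. exact Ha.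
Qed.

Lemma le_agree (a b : A) (x w y : X) :
  leA A a b -> theta a x w -> theta b x y -> theta a x y.
Proof.
  intros Hle Hw Hy.
  rewrite (theta_functional b x y w Hy (proj1 (leA_iff_incl a b) Hle x w Hw)).
  exact Hw.
Qed.

Hypothesis theta_meet : forall a b x y,
  theta (a_meet A a b) x y <-> theta a x y /\ theta b x y.

Definition disagree (s c : A) : A := a_restr A (a_meet A s c) c.

Lemma theta_disagree (s c : A) (x y : X) :
  theta (disagree s c) x y <-> theta c x y /\ ~ theta s x y.
Proof.
  unfold disagree. rewrite theta_restr. split.
  - intros [Hc Hnd]. split; [exact Hc |].
    intros Hs. apply Hnd. exists y. rewrite theta_meet. tauto.
  - intros [Hc Hns]. split; [exact Hc |].
    intros [z Hz]. rewrite theta_meet in Hz. destruct Hz as [Hsz Hcz].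
    rewrite (theta_functional c x y z Hc Hcz) in Hns. exact (Hns Hsz).
Qed.

Lemma disagreements_join (S : A -> Prop) (m c : A) :
  is_meet A S m ->
  (forall x, defined (theta c) x -> ~ defined (theta m) x) ->
  is_join A (fun t => exists s, S s /\ t = disagree s c) c.
Proof.
  intros [_ Hgreatest] Hoff. split.
  - intros t [s [_ ->]]. apply leA_iff_incl. intros x y H.
    apply theta_disagree in H. tauto.
  - intros u Hupper. apply leA_iff_incl. intros p q Hc.
    apply NNPP. intros Hnu.
    (* disagree u c is a lower bound of S, hence lies below m. *)
    assert (Hbelow : leA A (disagree u c) m).
    { apply Hgreatest. intros s Hs. apply leA_iff_incl. intros p' q' Hw.
      apply theta_disagree in Hw. destruct Hw as [Hc' Hnu'].
      apply NNPP. intros Hns. apply Hnu'.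
      apply (proj1 (leA_iff_incl _ _) (Hupper _ (ex_intro _ s (conj Hs eq_refl)))).
      apply theta_disagree. tauto. }
    apply (Hoff p (ex_intro _ q Hc)). exists q.
    apply (proj1 (leA_iff_incl _ _) Hbelow). apply theta_disagree. tauto.
Qed.

Lemma meet_complete_of_join_complete :
  join_complete A X theta -> meet_complete A X theta.
Proof.
  intros Hjoin S m [s0 Hs0] Hmeet x y. split.
  - intros Hm s Hs. exact (proj1 (leA_iff_incl m s) (proj1 Hmeet s Hs) x y Hm).
  - intros Hall.
    destruct (classic (defined (theta m) x)) as [[w Hw] | Hnd].
    + exact (le_agree m s0 x w y (proj1 Hmeet s0 Hs0) Hw (Hall s0 Hs0)).
    + set (c := a_restr A m s0).
      assert (Hoff : forall p, defined (theta c) p -> ~ defined (theta m) p).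
      { intros p [q Hq]. unfold c in Hq. rewrite theta_restr in Hq. tauto. }
      assert (Hc : theta c x y).
      { unfold c. rewrite theta_restr. split; [exact (Hall s0 Hs0) | exact Hnd]. }
      apply (Hjoin _ c (disagreements_join S m c Hmeet Hoff)) in Hc.
      destruct Hc as [t [[s [Hs ->]] Ht]].
      apply theta_disagree in Ht. destruct (proj2 Ht (Hall s Hs)).
Qed.

End RepresentationByPartialFunctions.

Theorem corollary3p6 (sig : signature) (A : alg) (X : Type) (theta : A -> prel X) :
  sig OpRestr -> sig OpMeet ->
  is_rep sig A X theta ->
  join_complete A X theta -> meet_complete A X theta.
Proof.
  intros Hsig_restr Hsig_meet [Hfun [Hinj [Hrestr [_ [Hmeet _]]]]].
  exact (meet_complete_of_join_complete A X theta Hfun Hinj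
           (Hrestr Hsig_restr) (Hmeet Hsig_meet)).
Qed.
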